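(* For every integer $n\ge1$, $\zeta(-n,-n-1|1)=\zeta(-n-1,-n|1)$.
   Context: Normalized multiple Bernoulli polynomials: for integers $k\ge0$, $\zeta(-k|z)=-\frac{B_{k+1}(z)}{k+1}$ ($B_n(z)$ the Bernoulli polynomials, $B_n=B_n(0)$), and for $k_1,k_2\ge0$, $\zeta(-k_1,-k_2|z)=-\frac{1}{k_2+1}\zeta(-k_1-k_2-1|z)-\frac12\zeta(-k_1-k_2|z)+\sum_{q=1}^{k_2}(-k_2)_q\frac{B_{q+1}}{(q+1)!}\zeta(-k_1-k_2+q|z)$, with $(a)_q=a(a+1)\cdots(a+q-1)$. *)

From mathcomp Require Import all_boot all_order all_algebra.
Set Implicit Arguments. Unset Strict Implicit. Unset Printing Implicit Defensive.
Import Order.TTheory GRing.Theory Num.Theory.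
Local Open Scope ring_scope.

(* bern_seq n = [:: B_0; ...; B_n], Bernoulli numbers with B_1 = -1/2,
   from the recurrence  sum_{k=0}^{m} C(m+1,k) B_k = 0  (m >= 1), B_0 = 1. *)
Fixpoint bern_seq (n : nat) : seq rat :=
  match n with
  | 0 => [:: 1]
  | m.+1 => let s := bern_seq m in
            rcons s (- ((m.+2)%:R)^-1 * \sum_(k < m.+1) ('C(m.+2, k))%:R * s`_k)
  end.

Definition bernoulli (n : nat) : rat := (bern_seq n)`_n.

Definition bernoulli_poly (n : nat) (z : rat) : rat :=
  \sum_(k < n.+1) ('C(n, k))%:R * bernoulli k * z ^+ (n - k).

Definition pochhammer (a : rat) (q : nat) : rat :=
  \prod_(i < q) (a + i%:R).

(* zeta(-k | z) = - B_{k+1}(z) / (k+1). *)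
Definition zeta1 (k : nat) (z : rat) : rat :=
  - bernoulli_poly k.+1 z / (k.+1)%:R.

Definition zeta2 (k1 k2 : nat) (z : rat) : rat :=
  - ((k2.+1)%:R)^-1 * zeta1 (k1 + k2).+1 z
  - 2^-1 * zeta1 (k1 + k2) z
  + \sum_(1 <= q < k2.+1)
      pochhammer (- (k2%:R)) q * bernoulli q.+1 / (q.+1)`!%:R
        * zeta1 (k1 + k2 - q)%N z.

From mathcomp Require Import all_boot all_order all_algebra ring lra zify.
Set Implicit Arguments. Unset Strict Implicit. Unset Printing Implicit Defensive.
Import Order.TTheory GRing.Theory Num.Theory.
Local Open Scope ring_scope.

(* At z = 1 only the Bernoulli numbers B_j with j >= 2 enter, since
   B_j(1) = B_j for j >= 2.  Comparing the power series x/(e^x - 1) at x and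
   at -x (their quotient is e^x) shows that B_j = 0 for odd j >= 3.  When
   k1 + k2 is odd, every term of zeta(-k1,-k2|1) except the middle one then
   contains an odd Bernoulli number: the first term contains B_(k1+k2+2) and
   the q-th term of the sum contains B_(q+1) B_(k1+k2+1-q), whose indices have
   odd sum.  Hence zeta(-k1,-k2|1) = -1/2 zeta(-(k1+k2)|1), which is symmetric
   in k1 and k2. *)

Section BinomialFactorial.
Variable R : numFieldType.

Lemma natr_fact_neq0 n : (n`!)%:R != 0 :> R.
Proof. by rewrite pnatr_eq0 -lt0n fact_gt0. Qed.

Lemma natr_bin_div_fact n k : (k <= n)%N ->
  ('C(n, k))%:R / (n`!)%:R = ((k`!)%:R)^-1 * (((n - k)`!)%:R)^-1 :> R.
Proof.
move=> le_kn; rewrite -(bin_fact le_kn) !natrM invfM mulrA mulfV ?mul1r ?invfM //.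
by rewrite pnatr_eq0 -lt0n bin_gt0.
Qed.

Lemma sum_bin_sign n : \sum_(j < n.+1) ('C(n.+1, j.+1))%:R * (-1) ^+ j = 1 :> R.
Proof.
have := exprDn (1 : R) (-1) n.+1.
rewrite subrr expr0n /= big_ord_recl /= expr1n bin0 !mul1r mulr1n.
under eq_bigr => j _ do
  rewrite expr1n mul1r /bump /= add1n exprS mulN1r mulNrn -mulr_natl.
by rewrite sumrN => /eqP; rewrite eq_sym subr_eq0 => /eqP.
Qed.

Lemma sum_sign_expm1_exp i :
  \sum_(j < i.+1) (-1) ^+ j / ((j.+1)`!)%:R / (((i - j)`!)%:R)
  = (((i.+1)`!)%:R)^-1 :> R.
Proof.
rewrite -[RHS]mulr1 -[X in _ = _ * X](sum_bin_sign i) mulr_sumr.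
apply: eq_bigr => j _; have le_ji : (j.+1 <= i.+1)%N by have := ltn_ord j; lia.
rewrite mulrA (mulrC _ ('C(_, _))%:R) natr_bin_div_fact // subSS.
ring.
Qed.

End BinomialFactorial.

Section TruncatedProduct.
Variable R : nzSemiRingType.
Implicit Types p q : {poly R}.

Lemma take_polyMl m p q : take_poly m (take_poly m p * q) = take_poly m (p * q).
Proof.
apply/polyP => i; rewrite !coef_take_poly; case: ltnP => // lt_im.
rewrite !coefM; apply: eq_bigr => j _; rewrite coef_take_poly ifT //.
by have := ltn_ord j; lia.
Qed.

Lemma take_polyMr m p q : take_poly m (p * take_poly m q) = take_poly m (p * q).
Proof.
apply/polyP => i; rewrite !coef_take_poly; case: ltnP => // lt_im.
rewrite !coefM; apply: eq_bigr => j _; rewrite coef_take_poly ifT //.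
by have := ltn_ord j; lia.
Qed.

Lemma coef_poly_mul m (a b : nat -> R) i : (i < m)%N ->
  (\poly_(k < m) a k * \poly_(k < m) b k)`_i = \sum_(j < i.+1) a j * b (i - j)%N.
Proof.
move=> lt_im; rewrite coefM; apply: eq_bigr => j _.
have lt_ji := ltn_ord j; rewrite !coef_poly ifT ?ifT //; lia.
Qed.

End TruncatedProduct.

Lemma sum_sign_twist (R : comNzRingType) (a b : nat -> R) i :
  \sum_(j < i.+1) ((-1) ^+ j * a j) * ((-1) ^+ (i - j) * b (i - j)%N)
  = (-1) ^+ i * \sum_(j < i.+1) a j * b (i - j)%N.
Proof.
rewrite mulr_sumr; apply: eq_bigr => j _.
have le_ji : (j <= i)%N by rewrite -ltnS.
have -> : (-1) ^+ i = (-1) ^+ j * (-1) ^+ (i - j) :> R by rewrite -exprD subnKC.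
ring.
Qed.

Lemma size_bern_seq n : size (bern_seq n) = n.+1.
Proof. by elim: n => [|n IHn] //=; rewrite size_rcons IHn. Qed.

Lemma nth_bern_seq n k : (k <= n)%N -> (bern_seq n)`_k = bernoulli k.
Proof.
elim: n k => [|n IHn] k; first by case: k.
rewrite leq_eqVlt => /orP[/eqP -> //|lt_kn].
by rewrite /= nth_rcons size_bern_seq lt_kn IHn.
Qed.

Lemma sum_bin_bernoulli m :
  \sum_(k < m.+2) ('C(m.+2, k))%:R * bernoulli k = 0.
Proof.
rewrite big_ord_recr /=.
have -> : bernoulli m.+1 =
    - ((m.+2)%:R)^-1 * \sum_(k < m.+1) ('C(m.+2, k))%:R * bernoulli k.
  rewrite /bernoulli /= nth_rcons size_bern_seq ltnn eqxx.
  by congr (_ * _); apply: eq_bigr => k _; rewrite nth_bern_seq // -ltnS.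
have n_neq0 : (m.+2)%:R != 0 :> rat by rewrite pnatr_eq0.
by rewrite binSn mulrA mulrN mulfV // mulN1r subrr.
Qed.

Lemma bernoulli_poly1 j : (2 <= j)%N -> bernoulli_poly j 1 = bernoulli j.
Proof.
case: j => [|[|m]] // _; rewrite /bernoulli_poly.
under eq_bigr => i _ do rewrite expr1n mulr1.
by rewrite big_ord_recr /= sum_bin_bernoulli binn add0r mul1r.
Qed.

Lemma sum_bernoulli_expm1 i :
  \sum_(j < i.+1) bernoulli j / (j`!)%:R / (((i - j).+1)`!)%:R = (i == 0)%:R.
Proof.
case: i => [|m]; first by rewrite big_ord1 subnn !divr1.
rewrite -[RHS](mulr0 ((m.+2)`!%:R)^-1) -[in RHS](sum_bin_bernoulli m) mulr_sumr.
apply: eq_bigr => j _; have le_jm : (j <= m.+1)%N by have := ltn_ord j; lia.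
rewrite -subSn // mulrA (mulrC _ ('C(_, _))%:R) (natr_bin_div_fact _ (leqW le_jm)).
ring.
Qed.

Lemma sum_bernoulli_exp i :
  \sum_(j < i.+1) bernoulli j / (j`!)%:R / (((i - j)`!)%:R)
  = bernoulli_poly i 1 / (i`!)%:R.
Proof.
rewrite /bernoulli_poly mulr_suml; apply: eq_bigr => j _.
have le_ji : (j <= i)%N by have := ltn_ord j; lia.
rewrite expr1n mulr1 [RHS]mulrAC natr_bin_div_fact //.
ring.
Qed.

Lemma bernoulli_reflection i :
  (-1) ^+ i * bernoulli i / (i`!)%:R = bernoulli_poly i 1 / (i`!)%:R.
Proof.
set M := i.+1.
(* Truncations of x/(e^x - 1), (e^x - 1)/x and e^x; primes mark x := -x. *)
pose B := \poly_(k < M) (bernoulli k / (k`!)%:R).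
pose E := \poly_(k < M) ((k.+1)`!%:R)^-1 : {poly rat}.
pose X := \poly_(k < M) ((k`!)%:R)^-1 : {poly rat}.
pose B' := \poly_(k < M) ((-1) ^+ k * (bernoulli k / (k`!)%:R)).
pose E' := \poly_(k < M) ((-1) ^+ k * ((k.+1)`!%:R)^-1) : {poly rat}.
have BE : take_poly M (B * E) = take_poly M 1.
  apply/polyP => k; rewrite !coef_take_poly; case: ifP => // lt_kM.
  by rewrite coef_poly_mul // coef1 sum_bernoulli_expm1.
have BE' : take_poly M (B' * E') = take_poly M 1.
  apply/polyP => k; rewrite !coef_take_poly; case: ifP => // lt_kM.
  rewrite coef_poly_mul // (sum_sign_twist (fun j => bernoulli j / (j`!)%:R)
    (fun j => ((j.+1)`!%:R)^-1)) sum_bernoulli_expm1 coef1.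
  by case: k {lt_kM} => [|k]; rewrite ?expr0 ?mul1r ?mulr0.
have EX : take_poly M (E' * X) = take_poly M E.
  apply/polyP => k; rewrite !coef_take_poly; case: ifP => // lt_kM.
  by rewrite coef_poly_mul // coef_poly lt_kM -sum_sign_expm1_exp.
have reflect_BX : take_poly M B' = take_poly M (B * X).
  rewrite -[B']mulr1 -take_polyMr -BE take_polyMr mulrA -take_polyMr -EX.
  rewrite take_polyMr (_ : B' * B * (E' * X) = B' * E' * (B * X)); last by ring.
  by rewrite -take_polyMl BE' take_polyMl mul1r.
have := congr1 (fun p : {poly rat} => p`_i) reflect_BX.
rewrite /= !coef_take_poly ltnSn coef_poly ltnSn.
by rewrite coef_poly_mul // sum_bernoulli_exp mulrA.
Qed.

Lemma bernoulli_odd k : odd k -> (3 <= k)%N -> bernoulli k = 0.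
Proof.
move=> odd_k ge3_k; have := bernoulli_reflection k.
rewrite bernoulli_poly1 ?(ltnW ge3_k) // -signr_odd odd_k expr1 mulN1r.
have := natr_fact_neq0 rat k.
by move=> kf_neq0 /(congr1 (fun x => x * (k`!)%:R)); rewrite !divfK //; lra.
Qed.

Lemma zeta1_at1 k : (1 <= k)%N -> zeta1 k 1 = - bernoulli k.+1 / (k.+1)%:R.
Proof. by move=> ge1_k; rewrite /zeta1 bernoulli_poly1. Qed.

Lemma zeta2_at1_odd_weight k1 k2 n :
  (1 <= n)%N -> (k1 + k2 = n.*2.+1)%N -> (k2 <= n.+1)%N ->
  zeta2 k1 k2 1 = - 2^-1 * zeta1 n.*2.+1 1.
Proof.
move=> ge1_n weight le_k2; rewrite /zeta2 weight zeta1_at1 //.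
rewrite bernoulli_odd /= ?odd_double //.
rewrite big_nat_cond big1 ?mul0r ?oppr0 ?mulr0; first by ring.
move=> q /andP[/andP[ge1_q le_qk2] _].
have [odd_q|even_q] := boolP (odd q).
  rewrite zeta1_at1; last by lia.
  rewrite (bernoulli_odd (k := (n.*2.+1 - q).+1)); first by ring.
    by rewrite /= oddB ?odd_q /= ?odd_double //; lia.
  by lia.
by rewrite (bernoulli_odd (k := q.+1)) //=; [ring | lia].
Qed.

Theorem propositionB (n : nat) (hn : (1 <= n)%N) :
  zeta2 n n.+1 1 = zeta2 n.+1 n 1.
Proof.
by rewrite !(zeta2_at1_odd_weight (n := n)) //; lia.
Qed.
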